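(* The linear span of $\{(I-S)h_k:k\geq2\}$ is dense in $H^2$.
   Context: $H^2$ is the Hardy space on the open unit disk $\mathbb{D}$ and $S$ the shift operator $Sf(z)=zf(z)$. For $k\geq 2$, $h_k(z)=\frac{1}{1-z}\big(\mathrm{Log}(1-z^k)-\mathrm{Log}(1-z)-\ln k\big)$ with $\mathrm{Log}$ the principal branch, so $(I-S)h_k(z)=\mathrm{Log}(1-z^k)-\mathrm{Log}(1-z)-\ln k$. *)

From Stdlib Require Import Reals.
Open Scope R_scope.

Definition Cx : Type := (R * R)%type.

Definition RtoC (x : R) : Cx := (x, 0).
Definition C0 : Cx := (0, 0).
Definition C1 : Cx := (1, 0).
Definition Cadd (z w : Cx) : Cx := (fst z + fst w, snd z + snd w).
Definition Copp (z : Cx) : Cx := (- fst z, - snd z).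
Definition Csub (z w : Cx) : Cx := Cadd z (Copp w).
Definition Cmul (z w : Cx) : Cx :=
  (fst z * fst w - snd z * snd w, fst z * snd w + snd z * fst w).
Fixpoint Cpow (z : Cx) (n : nat) : Cx :=
  match n with O => C1 | S m => Cmul z (Cpow z m) end.

Definition Cnorm2 (z : Cx) : R := fst z * fst z + snd z * snd z.
Definition Cmod (z : Cx) : R := sqrt (Cnorm2 z).

(* principal argument in (-pi, pi] (value 0 at z = 0, irrelevant) *)
Definition Arg (z : Cx) : R :=
  let x := fst z in let y := snd z in
  if Rlt_dec 0 x then atan (y / x)
  else if Rlt_dec x 0 then
    (if Rle_dec 0 y then atan (y / x) + PI else atan (y / x) - PI)
  else if Rlt_dec 0 y then PI / 2
  else if Rlt_dec y 0 then - (PI / 2)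
  else 0.

Definition CLog (z : Cx) : Cx := (ln (Cmod z), Arg z).

Definition Cinfinite_sum (f : nat -> Cx) (l : Cx) : Prop :=
  infinite_sum (fun n => fst (f n)) (fst l) /\
  infinite_sum (fun n => snd (f n)) (snd l).

Fixpoint Csum (f : nat -> Cx) (N : nat) : Cx :=
  match N with O => C0 | S m => Cadd (Csum f m) (f m) end.

Definition inD (z : Cx) : Prop := Cnorm2 z < 1.

Definition IminusS_hk (k : nat) (z : Cx) : Cx :=
  Csub (Csub (CLog (Csub C1 (Cpow z k))) (CLog (Csub C1 z))) (RtoC (ln (INR k))).

(* H^2 identified with the Taylor coefficient sequences that are square summable *)
Definition inH2 (a : nat -> Cx) : Prop :=
  exists L, infinite_sum (fun n => Cnorm2 (a n)) L.

Definition taylor_coeffs (f : Cx -> Cx) (b : nat -> Cx) : Prop :=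
  forall z, inD z -> Cinfinite_sum (fun n => Cmul (b n) (Cpow z n)) (f z).

(* The Taylor coefficients of (I - S) h_k are v_k = l - D_k l - (ln k) e_0, where
   l_n = 1/n (the coefficients of -Log(1 - z)) and D_k x is the coefficient sequence of
   f(z^k) when x is that of f.  Since D_d v_k = v_(kd) - v_d, the real span W of the v_k
   is D-invariant.  First, (v_2 - v_(2K)) / ln K = e_0 + O(1 / ln K), so e_0 lies in the
   l^2-closure of W.  Next, the sieve operator P_Q = prod_(p <= Q prime) (I - D_p / p)
   maps W into W, fixes the line of e_0 and sends l to the sequence supported on the
   integers free of prime factors <= Q, which is e_1 + O(1 / sqrt Q); as P_Q commutes
   with D_k, P_Q v_k = e_1 - e_k + c e_0 + O(1 / sqrt Q).  Hence e_1 - e_k is in the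
   closure for k >= 2, and averaging over 2 <= k < M + 2 gives e_1 up to 1 / sqrt M.
   So all e_k, hence all of l^2, lie in the closure; complex sequences are handled by
   their real and imaginary parts, and the given coefficients b_k equal v_k by
   uniqueness of power series on the real diameter. *)

From Pilot Require Import Defs.
From Stdlib Require Import Reals Lia Lra ClassicalEpsilon FunctionalExtensionality.
From Coquelicot Require Import Rbar Lim_seq Series PSeries Derive Continuity Hierarchy AutoDerive.
Open Scope R_scope.

Fixpoint sum_lt (f : nat -> R) (N : nat) : R :=
  match N with O => 0 | S m => sum_lt f m + f m end.

Lemma sum_lt_ext (f g : nat -> R) N :
  (forall j, (j < N)%nat -> f j = g j) -> sum_lt f N = sum_lt g N.
Proof.
  induction N as [|N IH]; intros H; simpl; [reflexivity|].
  rewrite IH, H; auto with arith.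
Qed.

Lemma sum_lt_plus (f g : nat -> R) N :
  sum_lt (fun j => f j + g j) N = sum_lt f N + sum_lt g N.
Proof. induction N as [|N IH]; simpl; [ring|]. rewrite IH. ring. Qed.

Lemma sum_lt_scal (c : R) (f : nat -> R) N :
  sum_lt (fun j => c * f j) N = c * sum_lt f N.
Proof. induction N as [|N IH]; simpl; [ring|]. rewrite IH. ring. Qed.

Lemma sum_lt_const (c : R) N : sum_lt (fun _ => c) N = INR N * c.
Proof. induction N as [|N IH]; simpl sum_lt; [simpl; ring|]. rewrite IH, S_INR. ring. Qed.

Lemma sum_lt_single (a : R) j N :
  (j < N)%nat -> sum_lt (fun i => if (i =? j)%nat then a else 0) N = a.
Proof.
  induction N as [|N IH]; intros Hj; [lia|]. simpl sum_lt.
  destruct (Nat.eqb_spec N j) as [->|Hne].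
  - rewrite (sum_lt_ext _ (fun _ => 0)), sum_lt_const; [ring|].
    intros i Hi. destruct (Nat.eqb_spec i j); [lia|reflexivity].
  - rewrite IH by lia. ring.
Qed.

Lemma div_succ_cases (N k : nat) : (0 < k)%nat ->
  (Nat.divide k (S N) /\ S N / k = S (N / k))%nat \/
  (~ Nat.divide k (S N) /\ S N / k = N / k)%nat.
Proof.
  intros Hk.
  pose proof (Nat.div_mod_eq N k) as E. pose proof (Nat.mod_upper_bound N k ltac:(lia)) as B.
  destruct (Nat.eq_dec (S (N mod k)) k) as [Heq|Hne].
  - left. assert (E2 : (S N = k * S (N / k) + 0)%nat) by lia. split.
    + exists (S (N / k)). lia.
    + symmetry. apply (Nat.div_unique _ _ _ _ Hk E2).
  - right. assert (E2 : (S N = k * (N / k) + S (N mod k))%nat) by lia.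
    assert (Hr : (S (N mod k) < k)%nat) by lia. split.
    + intros Hd. apply Nat.Lcm0.mod_divide in Hd.
      rewrite <- (Nat.mod_unique _ _ _ _ Hr E2) in Hd. lia.
    + symmetry. apply (Nat.div_unique _ _ _ _ Hr E2).
Qed.

Lemma sum_f_R0_multiples (k : nat) (f : nat -> R) : (0 < k)%nat ->
  (forall n, ~ Nat.divide k n -> f n = 0) ->
  forall N, sum_f_R0 f N = sum_f_R0 (fun m => f (m * k)%nat) (N / k).
Proof.
  intros Hk Hf N. induction N as [|N IH].
  - rewrite Nat.Div0.div_0_l. reflexivity.
  - simpl sum_f_R0 at 1. rewrite IH.
    destruct (div_succ_cases N k Hk) as [[[m Hm] Hq]|[Hd Hq]]; rewrite Hq.
    + rewrite tech5, <- Hq, Hm, Nat.div_mul by lia. reflexivity.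
    + rewrite (Hf _ Hd). ring.
Qed.

Definition basis (k n : nat) : R := if (n =? k)%nat then 1 else 0.

(* Taylor coefficients of [- Log (1 - z)]. *)
Definition log_coeff (n : nat) : R := if (n =? 0)%nat then 0 else / INR n.

(* The coefficients of [f (z ^ d)] when [x] are those of [f]. *)
Definition dilate (d : nat) (x : nat -> R) (n : nat) : R :=
  if (n mod d =? 0)%nat then x (n / d)%nat else 0.

Lemma dilate_multiple d x m : (0 < d)%nat -> dilate d x (m * d) = x m.
Proof. intros Hd. unfold dilate. rewrite Nat.Div0.mod_mul, Nat.div_mul by lia. reflexivity. Qed.

Lemma dilate_not_divide d x n : ~ Nat.divide d n -> dilate d x n = 0.
Proof.
  intros Hn. unfold dilate. destruct (Nat.eqb_spec (n mod d) 0) as [E|]; [|reflexivity].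
  apply Nat.Lcm0.mod_divide in E. contradiction.
Qed.

Lemma dilate_plus d x y : dilate d (fun n => x n + y n) = (fun n => dilate d x n + dilate d y n).
Proof. apply functional_extensionality. intros n. unfold dilate. destruct (_ =? _)%nat; ring. Qed.

Lemma dilate_minus d x y : dilate d (fun n => x n - y n) = (fun n => dilate d x n - dilate d y n).
Proof. apply functional_extensionality. intros n. unfold dilate. destruct (_ =? _)%nat; ring. Qed.

Lemma dilate_scal d c x : dilate d (fun n => c * x n) = (fun n => c * dilate d x n).
Proof. apply functional_extensionality. intros n. unfold dilate. destruct (_ =? _)%nat; ring. Qed.

Lemma divide_cases d n : (exists m, n = (m * d)%nat) \/ ~ Nat.divide d n.
Proof.
  destruct (Nat.eq_dec (n mod d) 0) as [E|E].
  - left. apply Nat.Lcm0.mod_divide in E as [m ->]. exists m. reflexivity.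
  - right. intros H. apply E, Nat.Lcm0.mod_divide, H.
Qed.

Lemma dilate_dilate d k x : (0 < d)%nat -> (0 < k)%nat ->
  dilate d (dilate k x) = dilate (k * d) x.
Proof.
  intros Hd Hk. apply functional_extensionality. intros n.
  destruct (divide_cases d n) as [[m ->]|Hn].
  - rewrite dilate_multiple by exact Hd. destruct (divide_cases k m) as [[j ->]|Hm].
    + replace (j * k * d)%nat with (j * (k * d))%nat by lia.
      rewrite !dilate_multiple by lia. reflexivity.
    + assert (~ Nat.divide (k * d) (m * d)).
      { intros [j Hj]. apply Hm. exists j. apply (Nat.mul_cancel_r _ _ d); lia. }
      rewrite !dilate_not_divide by assumption. reflexivity.
  - assert (~ Nat.divide (k * d) n).
    { intros [j Hj]. apply Hn. exists (j * k)%nat. lia. }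
    rewrite !dilate_not_divide by assumption. reflexivity.
Qed.

Lemma dilate_basis0 d : (0 < d)%nat -> dilate d (basis 0) = basis 0.
Proof.
  intros Hd. apply functional_extensionality. intros n. unfold basis.
  destruct (divide_cases d n) as [[m ->]|Hn].
  - rewrite dilate_multiple by exact Hd. unfold basis.
    destruct (Nat.eqb_spec m 0), (Nat.eqb_spec (m * d) 0); reflexivity || nia.
  - rewrite dilate_not_divide by exact Hn.
    destruct (Nat.eqb_spec n 0) as [->|]; [|reflexivity].
    exfalso. apply Hn, Nat.divide_0_r.
Qed.

Lemma dilate_basis1 k : (0 < k)%nat -> dilate k (basis 1) = basis k.
Proof.
  intros Hk. apply functional_extensionality. intros n. unfold basis.
  destruct (divide_cases k n) as [[m ->]|Hn].
  - rewrite dilate_multiple by exact Hk. unfold basis.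
    destruct (Nat.eqb_spec m 1), (Nat.eqb_spec (m * k) k); reflexivity || nia.
  - rewrite dilate_not_divide by exact Hn.
    destruct (Nat.eqb_spec n k) as [->|]; [|reflexivity].
    exfalso. apply Hn, Nat.divide_refl.
Qed.

Lemma sum_sq_dilate k x N : (0 < k)%nat ->
  sum_f_R0 (fun n => dilate k x n * dilate k x n) N = sum_f_R0 (fun m => x m * x m) (N / k).
Proof.
  intros Hk. rewrite (sum_f_R0_multiples k) by
    (auto; intros n Hn; rewrite dilate_not_divide by exact Hn; ring).
  apply sum_eq. intros m _. rewrite dilate_multiple by exact Hk. reflexivity.
Qed.

Lemma infinite_sum_dilate k x t l : (0 < k)%nat ->
  infinite_sum (fun m => x m * (t ^ k) ^ m) l -> infinite_sum (fun n => dilate k x n * t ^ n) l.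
Proof.
  intros Hk H eps Heps. destruct (H eps Heps) as [M HM]. exists (M * k)%nat. intros N HN.
  rewrite (sum_f_R0_multiples k) by
    (auto; intros n Hn; rewrite dilate_not_divide by exact Hn; ring).
  rewrite (sum_eq _ (fun m => x m * (t ^ k) ^ m)).
  - apply HM. apply Nat.div_le_lower_bound; lia.
  - intros m _. rewrite dilate_multiple, <- pow_mult, Nat.mul_comm by exact Hk. reflexivity.
Qed.

Definition l2_le (z : nat -> R) (e : R) : Prop :=
  forall N, sum_f_R0 (fun n => z n * z n) N <= e * e.

Lemma l2_le_ext z w e : (forall n, z n = w n) -> l2_le z e -> l2_le w e.
Proof. intros E H. replace w with z; [exact H|]. apply functional_extensionality, E. Qed.

Lemma l2_le_zero e : l2_le (fun _ => 0) e.
Proof. intros N. rewrite sum_eq_R0 by (intros; ring). nra. Qed.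

Lemma l2_le_weaken z e f : 0 <= e <= f -> l2_le z e -> l2_le z f.
Proof. intros He H N. specialize (H N). nra. Qed.

Lemma l2_le_scal z c e : l2_le z e -> l2_le (fun n => c * z n) (Rabs c * e).
Proof.
  intros H N. rewrite (sum_eq _ (fun n => z n * z n * (c * c))) by (intros; ring).
  rewrite <- scal_sum.
  replace (Rabs c * e * (Rabs c * e)) with (Rabs c * Rabs c * (e * e)) by ring.
  rewrite <- Rabs_mult, Rabs_pos_eq by nra.
  apply Rmult_le_compat_l; [nra|apply H].
Qed.

Lemma l2_le_plus z w e f : 0 < e -> 0 < f -> l2_le z e -> l2_le w f ->
  l2_le (fun n => z n + w n) (e + f).
Proof.
  intros He Hf Hz Hw N.
  (* [2 z w <= (f/e) z^2 + (e/f) w^2], then sum. *)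
  apply Rle_trans with (sum_f_R0 (fun n => z n * z n * (1 + f / e) + w n * w n * (1 + e / f)) N).
  { apply sum_growing. intros n.
    assert (Hamgm : 2 * z n * w n <= f / e * (z n * z n) + e / f * (w n * w n)).
    { apply Rmult_le_reg_l with (e * f); [nra|].
      replace (e * f * (f / e * (z n * z n) + e / f * (w n * w n)))
        with (f * f * (z n * z n) + e * e * (w n * w n)) by (field; lra).
      pose proof (Rle_0_sqr (f * z n - e * w n)). unfold Rsqr in *. nra. }
    lra. }
  rewrite plus_sum, <- !scal_sum.
  assert (0 < f / e) by (apply Rdiv_lt_0_compat; lra).
  assert (0 < e / f) by (apply Rdiv_lt_0_compat; lra).
  specialize (Hz N). specialize (Hw N).
  apply Rle_trans with ((1 + f / e) * (e * e) + (1 + e / f) * (f * f)).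
  - apply Rplus_le_compat; apply Rmult_le_compat_l; lra.
  - right. field. lra.
Qed.

Lemma l2_le_minus z w e f : 0 < e -> 0 < f -> l2_le z e -> l2_le w f ->
  l2_le (fun n => z n - w n) (e + f).
Proof.
  intros He Hf Hz Hw.
  apply (l2_le_ext (fun n => z n + -1 * w n)); [intros; ring|].
  apply l2_le_plus; auto.
  replace f with (Rabs (-1) * f) by (rewrite Rabs_left by lra; ring).
  apply l2_le_scal, Hw.
Qed.

Lemma l2_le_dilate k z e : (0 < k)%nat -> l2_le z e -> l2_le (dilate k z) e.
Proof. intros Hk H N. rewrite sum_sq_dilate by exact Hk. apply H. Qed.

Definition tail_sq (M n : nat) : R := if (n <=? M)%nat then 0 else / (INR n * INR n).

Lemma sum_tail_sq M N : (0 < M)%nat -> sum_f_R0 (tail_sq M) N <= / INR M.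
Proof.
  intros HM.
  (* telescoping: [1 / n^2 <= 1 / (n - 1) - 1 / n] *)
  assert (Htele : sum_f_R0 (tail_sq M) N <= / INR M - / INR (Nat.max M N)).
  { induction N as [|N IH].
    - rewrite Nat.max_0_r. unfold tail_sq. simpl. lra.
    - rewrite tech5. unfold tail_sq at 2. destruct (Nat.leb_spec (S N) M) as [HN|HN].
      + rewrite !Nat.max_l in * by lia. lra.
      + rewrite Nat.max_r in IH by lia. rewrite Nat.max_r by lia.
        assert (HN1 : 1 <= INR N) by (apply (le_INR 1); lia).
        rewrite S_INR.
        assert (/ ((INR N + 1) * (INR N + 1)) <= / INR N - / (INR N + 1)).
        { replace (/ INR N - / (INR N + 1)) with (/ (INR N * (INR N + 1))) by (field; lra).
          apply Rinv_le_contravar; nra. }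
        lra. }
  assert (0 < / INR (Nat.max M N)) by (apply Rinv_0_lt_compat, lt_0_INR; lia).
  lra.
Qed.

Lemma exists_nat_inv_le e : 0 < e -> exists M : nat, (0 < M)%nat /\ / INR M <= e.
Proof.
  intros He. destruct (INR_unbounded (/ e)) as [M HM].
  assert (HM0 : 0 < INR M) by (eapply Rlt_trans; [apply Rinv_0_lt_compat, He|exact HM]).
  exists M. split; [apply INR_lt; exact HM0|].
  rewrite <- (Rinv_inv e). apply Rlt_le, Rinv_lt_contravar; [|exact HM].
  apply Rmult_lt_0_compat; [apply Rinv_0_lt_compat, He|exact HM0].
Qed.

Lemma sum_basis_le k N : sum_f_R0 (basis k) N <= 1.
Proof.
  assert (H : sum_f_R0 (basis k) N = if (k <=? N)%nat then 1 else 0).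
  { induction N as [|N IH].
    - unfold basis. simpl. destruct k; reflexivity.
    - rewrite tech5, IH. unfold basis.
      destruct (Nat.leb_spec k N), (Nat.leb_spec k (S N)), (Nat.eqb_spec (S N) k);
        try ring; lia. }
  rewrite H. destruct (k <=? N)%nat; lra.
Qed.

Lemma l2_le_log_coeff : l2_le log_coeff 2.
Proof.
  intros N. apply Rle_trans with (sum_f_R0 (fun n => basis 1 n + tail_sq 1 n) N).
  - apply sum_growing. intros [|[|n]]; unfold log_coeff, basis, tail_sq; simpl Nat.eqb; simpl Nat.leb.
    + lra.
    + simpl INR. lra.
    + apply Req_le. field. apply not_0_INR. lia.
  - rewrite plus_sum. pose proof (sum_basis_le 1 N).
    pose proof (sum_tail_sq 1 N ltac:(lia)). simpl INR in *. rewrite Rinv_1 in *. lra.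
Qed.

Lemma sum_lt_basis_shift_above c s M n : (s + M <= n)%nat ->
  sum_lt (fun j => c j * basis (j + s) n) M = 0.
Proof.
  induction M as [|M IH]; intros Hn; simpl; [reflexivity|].
  rewrite IH by lia. unfold basis. destruct (Nat.eqb_spec n (M + s)); [lia|ring].
Qed.

Lemma sum_sq_sum_lt_basis c s M N :
  sum_f_R0 (fun n => sum_lt (fun j => c j * basis (j + s) n) M *
                     sum_lt (fun j => c j * basis (j + s) n) M) N <= sum_lt (fun j => c j * c j) M.
Proof.
  induction M as [|M IH]; simpl sum_lt.
  - rewrite sum_eq_R0 by (intros; ring). lra.
  - set (A n := sum_lt (fun j => c j * basis (j + s) n) M) in *.
    (* [A] vanishes where the new basis vector lives *)
    assert (Hpt : forall n, (A n + c M * basis (M + s) n) * (A n + c M * basis (M + s) n) =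
                            A n * A n + basis (M + s) n * (c M * c M)).
    { intros n. unfold basis. destruct (Nat.eqb_spec n (M + s)) as [->|]; [|ring].
      unfold A. rewrite sum_lt_basis_shift_above by lia. ring. }
    rewrite (sum_eq _ _ _ (fun n _ => Hpt n)), plus_sum, <- scal_sum.
    change (sum_f_R0 (fun n => A n * A n) N <= sum_lt (fun j => c j * c j) M) in IH.
    pose proof (sum_basis_le (M + s) N). pose proof (Rle_0_sqr (c M)). unfold Rsqr in *. nra.
Qed.

Lemma sum_lt_basis c M n : sum_lt (fun j => c j * basis j n) M = if (n <? M)%nat then c n else 0.
Proof.
  induction M as [|M IH]; simpl sum_lt; [reflexivity|]. rewrite IH. unfold basis.
  destruct (Nat.ltb_spec n M), (Nat.ltb_spec n (S M)), (Nat.eqb_spec n M); subst; try ring; lia.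
Qed.

Lemma sum_f_R0_tail (g : nat -> R) N0 N : (N0 <= N)%nat ->
  sum_f_R0 (fun n => if (n <=? N0)%nat then 0 else g n) N = sum_f_R0 g N - sum_f_R0 g N0.
Proof.
  induction N as [|N IH]; intros HN.
  - replace N0 with 0%nat by lia. simpl. ring.
  - destruct (Nat.eq_dec N0 (S N)) as [<-|Hne].
    + rewrite sum_eq_R0; [ring|]. intros n Hn. destruct (Nat.leb_spec n N0); [reflexivity|lia].
    + rewrite !tech5, IH by lia. destruct (Nat.leb_spec (S N) N0); [lia|ring].
Qed.

Definition is_subspace (W : (nat -> R) -> Prop) : Prop :=
  W (fun _ => 0) /\ (forall x y, W x -> W y -> W (fun n => x n + y n)) /\
  (forall c x, W x -> W (fun n => c * x n)).

Section L2Closure.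

Variable W : (nat -> R) -> Prop.
Hypothesis W_subspace : is_subspace W.

Definition l2_closure (x : nat -> R) : Prop :=
  forall eps, 0 < eps -> exists y, W y /\ l2_le (fun n => x n - y n) eps.

Lemma l2_closure_of_mem x : W x -> l2_closure x.
Proof.
  intros Hx eps _. exists x. split; [exact Hx|].
  apply (l2_le_ext (fun _ => 0)); [intros; ring|apply l2_le_zero].
Qed.

Lemma l2_closure_plus x y : l2_closure x -> l2_closure y -> l2_closure (fun n => x n + y n).
Proof.
  intros Hx Hy eps Heps.
  destruct (Hx (eps / 2)) as [x' [Wx Bx]]; [lra|].
  destruct (Hy (eps / 2)) as [y' [Wy By]]; [lra|].
  exists (fun n => x' n + y' n). split; [apply W_subspace; assumption|].
  replace eps with (eps / 2 + eps / 2) by field.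
  apply (l2_le_ext (fun n => (x n - x' n) + (y n - y' n))); [intros; ring|].
  apply l2_le_plus; auto; lra.
Qed.

Lemma l2_closure_scal c x : l2_closure x -> l2_closure (fun n => c * x n).
Proof.
  intros Hx eps Heps. pose proof (Rabs_pos c) as Hc.
  destruct (Hx (eps / (Rabs c + 1))) as [y [Wy By]]; [apply Rdiv_lt_0_compat; lra|].
  exists (fun n => c * y n). split; [apply W_subspace; assumption|].
  apply (l2_le_ext (fun n => c * (x n - y n))); [intros; ring|].
  apply l2_le_weaken with (Rabs c * (eps / (Rabs c + 1))); [|apply l2_le_scal, By].
  split.
  - apply Rmult_le_pos; [lra|]. apply Rlt_le, Rdiv_lt_0_compat; lra.
  - apply Rmult_le_reg_r with (Rabs c + 1); [lra|].
    field_simplify; [|lra]. nra.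
Qed.

Lemma l2_closure_minus x y : l2_closure x -> l2_closure y -> l2_closure (fun n => x n - y n).
Proof.
  intros Hx Hy. replace (fun n => x n - y n) with (fun n => x n + -1 * y n)
    by (apply functional_extensionality; intros; ring).
  apply l2_closure_plus; [|apply l2_closure_scal]; assumption.
Qed.

Lemma l2_closure_sum_lt (f : nat -> nat -> R) M :
  (forall j, l2_closure (f j)) -> l2_closure (fun n => sum_lt (fun j => f j n) M).
Proof.
  intros Hf. induction M as [|M IH]; simpl.
  - apply l2_closure_of_mem, W_subspace.
  - apply l2_closure_plus; auto.
Qed.

Lemma l2_closure_closed x :
  (forall eps, 0 < eps -> exists y, l2_closure y /\ l2_le (fun n => x n - y n) eps) -> l2_closure x.
Proof.
  intros H eps Heps.
  destruct (H (eps / 2)) as [y [Cy Bxy]]; [lra|].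
  destruct (Cy (eps / 2)) as [z [Wz Byz]]; [lra|].
  exists z. split; [exact Wz|]. replace eps with (eps / 2 + eps / 2) by field.
  apply (l2_le_ext (fun n => (x n - y n) + (y n - z n))); [intros; ring|].
  apply l2_le_plus; auto; lra.
Qed.

Lemma l2_closure_of_square_summable x g L :
  (forall k, l2_closure (basis k)) -> (forall n, x n * x n <= g n) -> infinite_sum g L ->
  l2_closure x.
Proof.
  intros Hbasis Hxg HL. apply l2_closure_closed. intros eps Heps.
  destruct (HL (eps * eps / 2)) as [N0 HN0]; [nra|].
  exists (fun n => sum_lt (fun j => x j * basis j n) (S N0)). split.
  { apply l2_closure_sum_lt. intros j. apply l2_closure_scal, Hbasis. }
  intros N.
  assert (Htail : forall n, (x n - sum_lt (fun j => x j * basis j n) (S N0)) *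
                            (x n - sum_lt (fun j => x j * basis j n) (S N0)) <=
                            if (n <=? N0)%nat then 0 else g n).
  { intros n. rewrite sum_lt_basis.
    destruct (Nat.ltb_spec n (S N0)), (Nat.leb_spec n N0); try lia.
    - lra.
    - rewrite Rminus_0_r. apply Hxg. }
  eapply Rle_trans; [apply sum_growing, Htail|].
  destruct (Nat.le_gt_cases N0 N) as [HN|HN].
  - rewrite sum_f_R0_tail by exact HN.
    pose proof (HN0 N HN) as H1. pose proof (HN0 N0 (Nat.le_refl _)) as H2.
    unfold Rdist in H1, H2. apply Rabs_def2 in H1. apply Rabs_def2 in H2. lra.
  - rewrite sum_eq_R0; [nra|]. intros n Hn. destruct (Nat.leb_spec n N0); [reflexivity|lia].
Qed.

End L2Closure.

Inductive span (F : nat -> nat -> R) : (nat -> R) -> Prop :=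
  | span_zero : span F (fun _ => 0)
  | span_gen j c : span F (fun n => c * F j n)
  | span_plus x y : span F x -> span F y -> span F (fun n => x n + y n).

Lemma span_scal F c x : span F x -> span F (fun n => c * x n).
Proof.
  induction 1 as [|j c'|x y _ IHx _ IHy].
  - replace (fun _ : nat => c * 0) with (fun _ : nat => 0)
      by (apply functional_extensionality; intros; ring). constructor.
  - replace (fun n => c * (c' * F j n)) with (fun n => (c * c') * F j n)
      by (apply functional_extensionality; intros; ring). constructor.
  - replace (fun n => c * (x n + y n)) with (fun n => c * x n + c * y n)
      by (apply functional_extensionality; intros; ring). constructor; assumption.
Qed.

Lemma span_repr F y : span F y -> exists N, forall M, (N <= M)%nat ->
  exists c, forall n, y n = sum_lt (fun j => c j * F j n) M.
Proof.
  induction 1 as [|j c|x y _ [Nx Hx] _ [Ny Hy]].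
  - exists 0%nat. intros M _. exists (fun _ => 0). intros n.
    rewrite (sum_lt_ext _ (fun _ => 0)), sum_lt_const by (intros; ring). ring.
  - exists (S j). intros M HM. exists (fun i => if (i =? j)%nat then c else 0). intros n.
    rewrite (sum_lt_ext _ (fun i => if (i =? j)%nat then c * F j n else 0)).
    + rewrite sum_lt_single by lia. reflexivity.
    + intros i _. destruct (Nat.eqb_spec i j) as [->|]; ring.
  - exists (Nat.max Nx Ny). intros M HM.
    destruct (Hx M) as [cx Ex]; [lia|]. destruct (Hy M) as [cy Ey]; [lia|].
    exists (fun j => cx j + cy j). intros n. rewrite Ex, Ey, <- sum_lt_plus.
    apply sum_lt_ext. intros; ring.
Qed.

(* [(I - S) h_k] has Taylor coefficients [-ln k, 1/n - [k | n] k/n]. *)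
Definition hk_coeff (k n : nat) : R :=
  log_coeff n - dilate k log_coeff n - ln (INR k) * basis 0 n.

Definition hk_span : (nat -> R) -> Prop := span (fun j => hk_coeff (j + 2)).

Lemma hk_span_subspace : is_subspace hk_span.
Proof. split; [|split]; [apply span_zero|apply span_plus|apply span_scal]. Qed.

Lemma hk_span_hk_coeff k : (2 <= k)%nat -> hk_span (hk_coeff k).
Proof.
  intros Hk. replace (hk_coeff k) with (fun n => 1 * hk_coeff (k - 2 + 2) n).
  - exact (span_gen (fun j => hk_coeff (j + 2)) (k - 2) 1).
  - apply functional_extensionality. intros n. replace (k - 2 + 2)%nat with k by lia. ring.
Qed.

Lemma dilate_hk_coeff d k : (0 < d)%nat -> (0 < k)%nat ->
  dilate d (hk_coeff k) = (fun n => hk_coeff (k * d) n - hk_coeff d n).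
Proof.
  intros Hd Hk. unfold hk_coeff at 1.
  rewrite dilate_minus, dilate_minus, dilate_scal, dilate_dilate, dilate_basis0 by lia.
  apply functional_extensionality. intros n. unfold hk_coeff.
  rewrite mult_INR, ln_mult by (apply lt_0_INR; lia). ring.
Qed.

Lemma hk_span_dilate d x : (2 <= d)%nat -> hk_span x -> hk_span (dilate d x).
Proof.
  intros Hd. induction 1 as [|j c|x y _ IHx _ IHy].
  - replace (dilate d (fun _ => 0)) with (fun _ : nat => 0); [constructor|].
    apply functional_extensionality. intros n. unfold dilate. destruct (_ =? _)%nat; reflexivity.
  - rewrite dilate_scal, dilate_hk_coeff by lia.
    replace (fun n => c * (hk_coeff ((j + 2) * d) n - hk_coeff d n))
      with (fun n => c * hk_coeff ((j + 2) * d) n + (- c) * hk_coeff d n)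
      by (apply functional_extensionality; intros; ring).
    constructor; apply span_scal, hk_span_hk_coeff; nia.
  - rewrite dilate_plus. constructor; assumption.
Qed.

Definition prime_nat (p : nat) : Prop :=
  (2 <= p)%nat /\ forall d, (2 <= d < p)%nat -> ~ Nat.divide d p.

Definition sieve_step (p : nat) (x : nat -> R) (n : nat) : R := x n - / INR p * dilate p x n.

Fixpoint sieve (Q : nat) (x : nat -> R) : nat -> R :=
  match Q with
  | O => x
  | S Q' => if excluded_middle_informative (prime_nat (S Q'))
            then sieve_step (S Q') (sieve Q' x) else sieve Q' x
  end.

Lemma sieve_ind (P : (nat -> R) -> Prop) Q x :
  (forall p y, prime_nat p -> P y -> P (sieve_step p y)) -> P x -> P (sieve Q x).
Proof.
  intros Hstep Hx. induction Q as [|Q IH]; simpl; [exact Hx|].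
  destruct (excluded_middle_informative (prime_nat (S Q))); auto.
Qed.

Lemma sieve_minus Q x y : sieve Q (fun n => x n - y n) = (fun n => sieve Q x n - sieve Q y n).
Proof.
  induction Q as [|Q IH]; simpl; [reflexivity|].
  destruct (excluded_middle_informative (prime_nat (S Q))); [|exact IH].
  rewrite IH. unfold sieve_step. rewrite dilate_minus.
  apply functional_extensionality. intros n. ring.
Qed.

Lemma sieve_scal Q c x : sieve Q (fun n => c * x n) = (fun n => c * sieve Q x n).
Proof.
  induction Q as [|Q IH]; simpl; [reflexivity|].
  destruct (excluded_middle_informative (prime_nat (S Q))); [|exact IH].
  rewrite IH. unfold sieve_step. rewrite dilate_scal.
  apply functional_extensionality. intros n. ring.
Qed.

Lemma sieve_dilate Q k x : (0 < k)%nat -> sieve Q (dilate k x) = dilate k (sieve Q x).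
Proof.
  intros Hk. induction Q as [|Q IH]; simpl; [reflexivity|].
  destruct (excluded_middle_informative (prime_nat (S Q))); [|exact IH].
  rewrite IH. unfold sieve_step.
  rewrite dilate_minus, dilate_scal, !dilate_dilate, Nat.mul_comm by lia. reflexivity.
Qed.

Lemma sieve_basis0 Q : exists c, sieve Q (basis 0) = (fun n => c * basis 0 n).
Proof.
  apply (sieve_ind (fun x => exists c, x = fun n => c * basis 0 n)).
  - intros p y [Hp _] [c ->]. exists (c - / INR p * c). unfold sieve_step.
    rewrite dilate_scal, dilate_basis0 by lia.
    apply functional_extensionality. intros n. ring.
  - exists 1. apply functional_extensionality. intros n. ring.
Qed.

Lemma hk_span_sieve Q x : hk_span x -> hk_span (sieve Q x).
Proof.
  apply sieve_ind. intros p y [Hp _] Hy. unfold sieve_step.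
  replace (fun n => y n - / INR p * dilate p y n) with (fun n => y n + - / INR p * dilate p y n)
    by (apply functional_extensionality; intros; ring).
  apply span_plus; [exact Hy|]. apply span_scal, hk_span_dilate; assumption.
Qed.

Definition rough (Q m : nat) : Prop := forall d, (2 <= d <= Q)%nat -> ~ Nat.divide d m.

Lemma rough_S_iff_composite Q m : ~ prime_nat (S Q) -> rough (S Q) m <-> rough Q m.
Proof.
  intros Hp. split; intros H d Hd Hdm.
  - apply (H d); [lia|assumption].
  - destruct (Nat.eq_dec d (S Q)) as [->|Hne]; [|apply (H d); [lia|assumption]].
    apply Hp. split; [lia|]. intros d' Hd' Hd'p.
    apply (H d'); [lia|]. eapply Nat.divide_trans; eassumption.
Qed.

Lemma rough_S_iff Q m : (0 < Q)%nat -> rough (S Q) m <-> rough Q m /\ ~ Nat.divide (S Q) m.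
Proof.
  intros HQ. split.
  - intros H. split; [intros d Hd; apply H; lia|apply H; lia].
  - intros [H Hp] d Hd. destruct (Nat.eq_dec d (S Q)) as [->|]; [assumption|apply H; lia].
Qed.

Lemma prime_nat_gcd_lt p d : prime_nat p -> (0 < d < p)%nat -> Nat.gcd d p = 1%nat.
Proof.
  intros [_ Hp] Hd. set (g := Nat.gcd d p).
  assert (Hgd : Nat.divide g d) by apply Nat.gcd_divide_l.
  assert (Hgp : Nat.divide g p) by apply Nat.gcd_divide_r.
  assert (Hg0 : g <> 0%nat) by (unfold g; intros E; apply Nat.gcd_eq_0 in E; lia).
  assert (Hgle : (g <= d)%nat) by (apply Nat.divide_pos_le; [lia|assumption]).
  destruct (Nat.eq_dec g 1) as [E|E]; [exact E|].
  exfalso. apply (Hp g); [lia|assumption].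
Qed.

Lemma rough_mul_prime Q m : prime_nat (S Q) -> rough Q (m * S Q) <-> rough Q m.
Proof.
  intros Hp. split; intros H d Hd Hdm.
  - apply (H d Hd). apply Nat.divide_mul_l, Hdm.
  - apply (H d Hd). apply (Nat.gauss d (S Q) m); [rewrite Nat.mul_comm; exact Hdm|].
    apply prime_nat_gcd_lt; [exact Hp|lia].
Qed.

Lemma log_coeff_mul m p : log_coeff (m * p) = log_coeff m * log_coeff p.
Proof.
  unfold log_coeff. destruct (Nat.eqb_spec m 0) as [->|Hm]; [simpl; ring|].
  destruct (Nat.eqb_spec p 0) as [->|Hp]; [rewrite Nat.mul_0_r; simpl; ring|].
  destruct (Nat.eqb_spec (m * p) 0); [lia|].
  rewrite mult_INR. field. split; apply not_0_INR; assumption.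
Qed.

Lemma if_em_iff (P P' : Prop) (a b : R) :
  (P <-> P') -> (if excluded_middle_informative P then a else b) =
                (if excluded_middle_informative P' then a else b).
Proof.
  intros H. destruct (excluded_middle_informative P), (excluded_middle_informative P');
    tauto.
Qed.

Lemma sieve_log_coeff Q n :
  sieve Q log_coeff n = if excluded_middle_informative (rough Q n) then log_coeff n else 0.
Proof.
  revert n. induction Q as [|Q IH]; intros n; simpl.
  - destruct (excluded_middle_informative (rough 0 n)) as [|H]; [reflexivity|].
    exfalso. apply H. intros d Hd. lia.
  - destruct (excluded_middle_informative (prime_nat (S Q))) as [Hp|Hp].
    2:{ rewrite IH. apply if_em_iff. symmetry. apply rough_S_iff_composite, Hp. }
    unfold sieve_step. rewrite IH. destruct Hp as [Hp2 Hp].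
    destruct (divide_cases (S Q) n) as [[m ->]|Hn].
    + rewrite dilate_multiple, IH by lia.
      rewrite (if_em_iff (rough Q (m * S Q)) (rough Q m)) by (apply rough_mul_prime; split; assumption).
      destruct (excluded_middle_informative (rough (S Q) (m * S Q))) as [H|_].
      { exfalso. apply (proj1 (rough_S_iff Q _ ltac:(lia)) H), Nat.divide_factor_r. }
      rewrite log_coeff_mul. unfold log_coeff at 2. destruct (Nat.eqb_spec (S Q) 0); [lia|].
      destruct (excluded_middle_informative (rough Q m)); ring.
    + rewrite dilate_not_divide, Rmult_0_r, Rminus_0_r by exact Hn. apply if_em_iff.
      rewrite rough_S_iff by lia. tauto.
Qed.

Lemma l2_le_sieve_log_coeff Q e : (0 < Q)%nat -> / INR Q <= e * e ->
  l2_le (fun n => sieve Q log_coeff n - basis 1 n) e.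
Proof.
  intros HQ He N. apply Rle_trans with (sum_f_R0 (tail_sq Q) N).
  - apply sum_growing. intros n. rewrite sieve_log_coeff.
    assert (Htail : 0 <= tail_sq Q n).
    { unfold tail_sq. destruct (Nat.leb_spec n Q); [lra|].
      apply Rlt_le, Rinv_0_lt_compat. assert (0 < INR n) by (apply lt_0_INR; lia). nra. }
    unfold basis. destruct (Nat.eqb_spec n 1) as [->|Hn1].
    + destruct (excluded_middle_informative (rough Q 1)) as [_|Hr].
      * unfold log_coeff. simpl. lra.
      * exfalso. apply Hr. intros d Hd Hdiv. apply Nat.divide_pos_le in Hdiv; lia.
    + destruct (excluded_middle_informative (rough Q n)) as [Hr|]; [|lra].
      unfold tail_sq, log_coeff. destruct (Nat.eqb_spec n 0) as [->|Hn0]; [simpl; lra|].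
      destruct (Nat.leb_spec n Q).
      * (* a [Q]-rough [n >= 2] exceeds [Q] *)
        exfalso. apply (Hr n); [lia|apply Nat.divide_refl].
      * apply Req_le. field. apply not_0_INR, Hn0.
  - eapply Rle_trans; [apply sum_tail_sq, HQ|exact He].
Qed.

Lemma hk_closure_basis0 : l2_closure hk_span (basis 0).
Proof.
  intros eps Heps.
  destruct (INR_unbounded (exp (4 / eps))) as [K HK].
  assert (HK0 : (0 < K)%nat).
  { destruct K; [|lia]. simpl in HK. pose proof (exp_pos (4 / eps)). lra. }
  assert (HlnK : 4 / eps < ln (INR K)).
  { rewrite <- (ln_exp (4 / eps)). apply ln_increasing; [apply exp_pos|exact HK]. }
  assert (HlnK0 : 0 < ln (INR K)).
  { eapply Rlt_trans; [|exact HlnK]. apply Rdiv_lt_0_compat; lra. }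
  assert (H4 : 4 < ln (INR K) * eps).
  { apply Rmult_lt_compat_r with (r := eps) in HlnK; [|exact Heps].
    replace (4 / eps * eps) with 4 in HlnK by (field; lra). exact HlnK. }
  (* [h_2 - h_(2K)] is [ln K] times [basis 0] up to two dilations of [log_coeff] *)
  exists (fun n => / ln (INR K) * hk_coeff 2 n + (- / ln (INR K)) * hk_coeff (2 * K) n).
  split.
  { apply span_plus; apply span_scal, hk_span_hk_coeff; lia. }
  apply (l2_le_ext (fun n => / ln (INR K) * (dilate 2 log_coeff n - dilate (2 * K) log_coeff n))).
  { intros n. unfold hk_coeff. rewrite mult_INR, ln_mult by (apply lt_0_INR; lia).
    unfold basis. destruct (n =? 0)%nat; field; lra. }
  apply l2_le_weaken with (Rabs (/ ln (INR K)) * (2 + 2)).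
  - pose proof (Rinv_0_lt_compat _ HlnK0). rewrite Rabs_pos_eq by lra. split; [lra|].
    apply Rmult_le_reg_l with (ln (INR K)); [exact HlnK0|].
    rewrite <- Rmult_assoc, Rinv_r by lra. lra.
  - apply l2_le_scal, l2_le_minus; try lra; apply l2_le_dilate, l2_le_log_coeff; lia.
Qed.

Lemma hk_closure_basis1_minus k : (2 <= k)%nat ->
  l2_closure hk_span (fun n => basis 1 n - basis k n).
Proof.
  intros Hk. apply l2_closure_closed. intros eps Heps.
  destruct (exists_nat_inv_le (eps / 2 * (eps / 2))) as [Q [HQ0 HQ]]; [nra|].
  destruct (sieve_basis0 Q) as [c Hc].
  exists (fun n => sieve Q (hk_coeff k) n + ln (INR k) * c * basis 0 n). split.
  { apply l2_closure_plus; [exact hk_span_subspace| |].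
    - apply l2_closure_of_mem, hk_span_sieve, hk_span_hk_coeff, Hk.
    - apply l2_closure_scal; [exact hk_span_subspace|exact hk_closure_basis0]. }
  set (z n := sieve Q log_coeff n - basis 1 n).
  apply (l2_le_ext (fun n => dilate k z n - z n)).
  { intros n. unfold hk_coeff. rewrite !sieve_minus, sieve_scal, sieve_dilate, Hc by lia.
    unfold z. rewrite dilate_minus, dilate_basis1 by lia. ring. }
  replace eps with (eps / 2 + eps / 2) by field.
  assert (Hz : l2_le z (eps / 2)) by (apply l2_le_sieve_log_coeff; assumption).
  apply l2_le_minus; [lra|lra| |exact Hz]. apply l2_le_dilate; [lia|exact Hz].
Qed.

Lemma hk_closure_basis1 : l2_closure hk_span (basis 1).
Proof.
  apply l2_closure_closed. intros eps Heps.
  destruct (exists_nat_inv_le (eps * eps)) as [M [HM0 HM]]; [nra|].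
  assert (HM0' : 0 < INR M) by (apply lt_0_INR, HM0).
  (* the error [sum_(j < M) basis (j + 2) / M] has norm [1 / sqrt M] *)
  exists (fun n => sum_lt (fun j => / INR M * (basis 1 n - basis (j + 2) n)) M). split.
  { apply l2_closure_sum_lt; [exact hk_span_subspace|]. intros j.
    apply l2_closure_scal; [exact hk_span_subspace|]. apply hk_closure_basis1_minus. lia. }
  apply (l2_le_ext (fun n => sum_lt (fun j => / INR M * basis (j + 2) n) M)).
  { intros n.
    rewrite (sum_lt_ext (fun j => / INR M * (basis 1 n - basis (j + 2) n))
               (fun j => / INR M * basis 1 n + -1 * (/ INR M * basis (j + 2) n))) by (intros; ring).
    rewrite sum_lt_plus, sum_lt_const, !sum_lt_scal. field. lra. }
  intros N. eapply Rle_trans; [apply sum_sq_sum_lt_basis|].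
  cbv beta. rewrite sum_lt_const.
  replace (INR M * (/ INR M * / INR M)) with (/ INR M) by (field; lra). exact HM.
Qed.

Lemma hk_closure_basis k : l2_closure hk_span (basis k).
Proof.
  destruct k as [|[|k]]; [exact hk_closure_basis0|exact hk_closure_basis1|].
  replace (basis (S (S k))) with (fun n => basis 1 n - (basis 1 n - basis (S (S k)) n))
    by (apply functional_extensionality; intros; ring).
  apply l2_closure_minus; [exact hk_span_subspace|exact hk_closure_basis1|].
  apply hk_closure_basis1_minus. lia.
Qed.

Lemma CV_radius_gt_of_series a x r :
  Rabs x < Rabs r -> ex_series (fun n => a n * r ^ n) -> Rbar_lt (Rabs x) (CV_radius a).
Proof.
  intros Hxr Hr. destruct (Rbar_lt_le_dec (CV_radius a) (Rabs r)) as [Hlt|Hle].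
  - exfalso. apply (CV_disk_outside a r Hlt), ex_series_lim_0, Hr.
  - eapply Rbar_lt_le_trans; [|exact Hle]. exact Hxr.
Qed.

Lemma CV_radius_log_coeff x : Rabs x < 1 -> Rbar_lt (Rabs x) (CV_radius log_coeff).
Proof.
  intros Hx. set (r := (Rabs x + 1) / 2).
  assert (Hr : 0 <= r < 1) by (unfold r; pose proof (Rabs_pos x); lra).
  apply (CV_radius_gt_of_series _ _ r); [rewrite (Rabs_pos_eq r) by lra; unfold r; lra|].
  apply (@ex_series_le R_AbsRing R_CompleteNormedModule _ (fun n => r ^ n)).
  - intros n. change norm with Rabs. rewrite Rabs_mult, <- RPow_abs, (Rabs_pos_eq r) by lra.
    rewrite <- (Rmult_1_l (r ^ n)) at 2. apply Rmult_le_compat_r; [apply pow_le; lra|].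
    unfold log_coeff. destruct (Nat.eqb_spec n 0); [rewrite Rabs_R0; lra|].
    rewrite Rabs_pos_eq by (apply Rlt_le, Rinv_0_lt_compat, lt_0_INR; lia).
    rewrite <- Rinv_1. apply Rinv_le_contravar; [lra|]. apply (le_INR 1). lia.
  - exists (/ (1 - r)). apply is_series_geom. rewrite Rabs_pos_eq; lra.
Qed.

Lemma PSeries_log_coeff t : Rabs t < 1 -> PSeries log_coeff t = - ln (1 - t).
Proof.
  intros Ht. set (r := (Rabs t + 1) / 2).
  pose proof (Rabs_pos t).
  assert (Hr : Rabs t < r < 1) by (unfold r; lra).
  assert (Hin : forall x, - r <= x <= r -> Rabs x < 1) by (intros x Hx; apply Rabs_def1; lra).
  assert (Hlog : forall x, Rabs x < 1 -> is_derive (fun y => - ln (1 - y)) x (/ (1 - x))).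
  { intros x Hx. apply Rabs_def2 in Hx. auto_derive; [lra|]. field. lra. }
  assert (Hcont : forall x, - r <= x <= r -> continuity_pt (fun y => - ln (1 - y)) x).
  { intros x Hx. apply continuity_pt_filterlim, (ex_derive_continuous (fun y => - ln (1 - y))).
    eexists. apply Hlog, Hin, Hx. }
  (* both sides have derivative [1 / (1 - x)] and vanish at [0] *)
  destruct (fn_eq_Derive_eq (PSeries log_coeff) (fun y => - ln (1 - y)) (- r) r) as [C HC].
  - apply PSeries_continuity, CV_radius_log_coeff, Hin. lra.
  - apply PSeries_continuity, CV_radius_log_coeff, Hin. lra.
  - apply Hcont. lra.
  - apply Hcont. lra.
  - intros x Hx. apply ex_derive_PSeries, CV_radius_log_coeff, Hin. lra.
  - intros x Hx. eexists. apply Hlog, Hin. lra.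
  - intros x Hx. rewrite Derive_PSeries by (apply CV_radius_log_coeff, Hin; lra).
    rewrite (is_derive_unique (fun y : R => - ln (1 - y)) _ _ (Hlog x (Hin x ltac:(lra)))).
    apply is_pseries_unique, is_pseries_R.
    apply (is_series_ext (fun n => x ^ n)); [|apply is_series_geom, Hin; lra].
    intros n. unfold PS_derive, log_coeff. simpl Nat.eqb. cbv iota.
    rewrite Rinv_r by (apply not_0_INR; lia). symmetry. apply Rmult_1_l.
  - assert (H0 := HC 0 ltac:(lra)). rewrite PSeries_0 in H0.
    unfold log_coeff in H0. simpl in H0. rewrite Rminus_0_r, ln_1 in H0.
    destruct (Rabs_def2 t r (proj1 Hr)). rewrite (HC t); lra.
Qed.

Lemma log_coeff_series t : Rabs t < 1 ->
  infinite_sum (fun n => log_coeff n * t ^ n) (- ln (1 - t)).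
Proof.
  intros Ht. rewrite <- PSeries_log_coeff by exact Ht.
  apply is_series_Reals, is_pseries_R, PSeries_correct, CV_radius_inside, CV_radius_log_coeff, Ht.
Qed.

Lemma basis0_series c t : infinite_sum (fun n => c * basis 0 n * t ^ n) c.
Proof.
  assert (Hsum : forall N, sum_f_R0 (fun n => c * basis 0 n * t ^ n) N = c).
  { induction N as [|N IH]; [unfold basis; simpl; ring|].
    rewrite tech5, IH. unfold basis. simpl. ring. }
  intros eps Heps. exists 0%nat. intros N _. rewrite Hsum. unfold Rdist.
  rewrite Rminus_diag, Rabs_R0. exact Heps.
Qed.

Lemma hk_coeff_series k t : (0 < k)%nat -> Rabs t < 1 ->
  infinite_sum (fun n => hk_coeff k n * t ^ n) (ln (1 - t ^ k) - ln (1 - t) - ln (INR k)).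
Proof.
  intros Hk Ht.
  assert (Htk : Rabs (t ^ k) < 1).
  { rewrite <- RPow_abs. apply pow_lt_1_compat; [split; [apply Rabs_pos|exact Ht]|lia]. }
  pose proof (CV_minus _ _ _ _
    (CV_minus _ _ _ _ (log_coeff_series t Ht)
       (infinite_sum_dilate k log_coeff t _ Hk (log_coeff_series (t ^ k) Htk)))
    (basis0_series (ln (INR k)) t)) as H.
  replace (ln (1 - t ^ k) - ln (1 - t) - ln (INR k))
    with (- ln (1 - t) - - ln (1 - t ^ k) - ln (INR k)) by ring.
  intros eps Heps. destruct (H eps Heps) as [N HN]. exists N. intros n Hn.
  specialize (HN n Hn). cbv beta in HN. rewrite <- !minus_sum in HN.
  erewrite sum_eq; [exact HN|]. intros i _. unfold hk_coeff. ring.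
Qed.

Lemma PSeries_of_infinite_sum a x l : infinite_sum (fun n => a n * x ^ n) l -> PSeries a x = l.
Proof. intros H. apply is_pseries_unique, is_pseries_R, is_series_Reals, H. Qed.

Lemma power_series_coeff_unique (a c : nat -> R) (f : R -> R) :
  (forall x, Rabs x < 1 -> infinite_sum (fun n => a n * x ^ n) (f x)) ->
  (forall x, Rabs x < 1 -> infinite_sum (fun n => c n * x ^ n) (f x)) ->
  forall n, a n = c n.
Proof.
  intros Ha Hc.
  assert (Hradius : forall b, (forall x, Rabs x < 1 -> infinite_sum (fun n => b n * x ^ n) (f x)) ->
                              Rbar_lt 0 (CV_radius b)).
  { intros b Hb. rewrite <- Rabs_R0. apply (CV_radius_gt_of_series _ _ (1 / 2)).
    - rewrite Rabs_R0, Rabs_pos_eq; lra.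
    - exists (f (1 / 2)). apply is_series_Reals, Hb. rewrite Rabs_pos_eq; lra. }
  intros n. apply PSeries_ext_recip; [apply Hradius, Ha|apply Hradius, Hc|].
  exists (mkposreal _ (ltac:(lra) : 0 < 1 / 2)). intros y Hy.
  change (Rabs (y - 0) < 1 / 2) in Hy. rewrite Rminus_0_r in Hy.
  rewrite (PSeries_of_infinite_sum _ _ _ (Ha y ltac:(lra))).
  rewrite (PSeries_of_infinite_sum _ _ _ (Hc y ltac:(lra))). reflexivity.
Qed.

Lemma Cpow_real t n : Cpow (t, 0) n = (t ^ n, 0).
Proof. induction n as [|n IH]; simpl; [reflexivity|]. rewrite IH. unfold Cmul; simpl. f_equal; ring. Qed.

Lemma CLog_real_pos x : 0 < x -> CLog (x, 0) = (ln x, 0).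
Proof.
  intros Hx. unfold CLog, Cmod, Cnorm2, Arg; simpl. f_equal.
  - replace (x * x + 0 * 0) with (Rsqr x) by (unfold Rsqr; ring). rewrite sqrt_Rsqr; lra.
  - destruct (Rlt_dec 0 x); [|lra]. unfold Rdiv. rewrite Rmult_0_l. apply atan_0.
Qed.

Lemma IminusS_hk_real k t : (0 < k)%nat -> Rabs t < 1 ->
  IminusS_hk k (t, 0) = (ln (1 - t ^ k) - ln (1 - t) - ln (INR k), 0).
Proof.
  intros Hk Ht. unfold IminusS_hk. rewrite Cpow_real.
  assert (Htk : Rabs (t ^ k) < 1).
  { rewrite <- RPow_abs. apply pow_lt_1_compat; [split; [apply Rabs_pos|exact Ht]|lia]. }
  apply Rabs_def2 in Ht. apply Rabs_def2 in Htk.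
  replace (Csub Defs.C1 (t ^ k, 0)) with (1 - t ^ k, 0) by (unfold Csub, Cadd, Copp, Defs.C1; simpl; f_equal; ring).
  replace (Csub Defs.C1 (t, 0)) with (1 - t, 0) by (unfold Csub, Cadd, Copp, Defs.C1; simpl; f_equal; ring).
  rewrite !CLog_real_pos by lra. unfold Csub, Cadd, Copp, RtoC; simpl. f_equal; ring.
Qed.

Lemma taylor_coeffs_IminusS_hk k (bk : nat -> Cx) : (2 <= k)%nat ->
  taylor_coeffs (IminusS_hk k) bk -> forall n, bk n = (hk_coeff k n, 0).
Proof.
  intros Hk Hb.
  (* on the real diameter the real and imaginary parts of the series separate *)
  assert (Hreal : forall t, Rabs t < 1 ->
    infinite_sum (fun n => fst (bk n) * t ^ n) (ln (1 - t ^ k) - ln (1 - t) - ln (INR k)) /\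
    infinite_sum (fun n => snd (bk n) * t ^ n) 0).
  { intros t Ht.
    assert (HD : inD (t, 0)) by (apply Rabs_def2 in Ht; unfold inD, Cnorm2; simpl; nra).
    destruct (Hb (t, 0) HD) as [H1 H2].
    rewrite IminusS_hk_real in H1, H2 by (lia || exact Ht). simpl in H1, H2.
    split; eapply Un_cv_ext; try eassumption; intros N; apply sum_eq; intros i _;
      rewrite Cpow_real; unfold Cmul; simpl; ring. }
  intros n. rewrite (surjective_pairing (bk n)). f_equal.
  - apply (power_series_coeff_unique (fun n => fst (bk n)) (hk_coeff k)
             (fun t => ln (1 - t ^ k) - ln (1 - t) - ln (INR k))).
    + intros t Ht. apply Hreal, Ht.
    + intros t Ht. apply hk_coeff_series; [lia|exact Ht].
  - apply (power_series_coeff_unique (fun n => snd (bk n)) (fun _ => 0) (fun _ => 0)).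
    + intros t Ht. apply Hreal, Ht.
    + intros t _. eapply Un_cv_ext; [|apply (basis0_series 0 t)].
      intros N. apply sum_eq. intros; ring.
Qed.

Lemma fst_Csum (g : nat -> Cx) N : fst (Csum g N) = sum_lt (fun j => fst (g j)) N.
Proof. induction N as [|N IH]; simpl; [reflexivity|]. rewrite IH. reflexivity. Qed.

Lemma snd_Csum (g : nat -> Cx) N : snd (Csum g N) = sum_lt (fun j => snd (g j)) N.
Proof. induction N as [|N IH]; simpl; [reflexivity|]. rewrite IH. reflexivity. Qed.

Lemma infinite_sum_nonneg_bounded (f : nat -> R) B :
  (forall n, 0 <= f n) -> (forall N, sum_f_R0 f N <= B) -> exists L, infinite_sum f L /\ L <= B.
Proof.
  intros Hf HB. destruct (Un_cv_crit (sum_f_R0 f)) as [L HL].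
  - intros n. rewrite tech5. pose proof (Hf (S n)). lra.
  - exists B. intros x [N ->]. apply HB.
  - exists L. split; [exact HL|]. apply (Rle_cv_lim HB HL).
    intros e He. exists 0%nat. intros n _. unfold R_dist. rewrite Rminus_diag, Rabs_R0. exact He.
Qed.

Lemma exists_infinite_sum_sqrt_lt (f : nat -> R) eps : 0 < eps -> (forall n, 0 <= f n) ->
  (forall N, sum_f_R0 f N <= eps * eps / 2) -> exists L, infinite_sum f L /\ sqrt L < eps.
Proof.
  intros Heps Hf HB. destruct (infinite_sum_nonneg_bounded f _ Hf HB) as [L [HL HLB]].
  exists L. split; [exact HL|].
  apply Rle_lt_trans with (sqrt (eps * eps / 2)); [apply sqrt_le_1_alt, HLB|].
  apply Rlt_le_trans with (sqrt (eps * eps)); [apply sqrt_lt_1_alt; nra|].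
  rewrite sqrt_square; lra.
Qed.

Lemma Cnorm2_sub_Csum_IminusS_hk (b : nat -> nat -> Cx)
  (Hb : forall k : nat, (2 <= k)%nat -> taylor_coeffs (IminusS_hk k) (b k)) a c1 c2 N n :
  Cnorm2 (Csub a (Csum (fun j => Cmul (c1 j, c2 j) (b (j + 2)%nat n)) N)) =
  (fst a - sum_lt (fun j => c1 j * hk_coeff (j + 2) n) N) *
  (fst a - sum_lt (fun j => c1 j * hk_coeff (j + 2) n) N) +
  (snd a - sum_lt (fun j => c2 j * hk_coeff (j + 2) n) N) *
  (snd a - sum_lt (fun j => c2 j * hk_coeff (j + 2) n) N).
Proof.
  assert (Hbj : forall j, b (j + 2)%nat n = (hk_coeff (j + 2) n, 0))
    by (intros j; apply taylor_coeffs_IminusS_hk; [lia|apply Hb; lia]).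
  unfold Cnorm2, Csub, Cadd, Copp. simpl. rewrite fst_Csum, snd_Csum.
  rewrite (sum_lt_ext (fun j => fst (Cmul (c1 j, c2 j) (b (j + 2)%nat n)))
                      (fun j => c1 j * hk_coeff (j + 2) n)),
          (sum_lt_ext (fun j => snd (Cmul (c1 j, c2 j) (b (j + 2)%nat n)))
                      (fun j => c2 j * hk_coeff (j + 2) n)); [ring| |];
    intros j _; rewrite Hbj; unfold Cmul; simpl; ring.
Qed.

Lemma l2_closure_hk_span_inH2 (a : nat -> Cx) : inH2 a ->
  l2_closure hk_span (fun n => fst (a n)) /\ l2_closure hk_span (fun n => snd (a n)).
Proof.
  intros [L HL].
  split; apply (l2_closure_of_square_summable _ hk_span_subspace _ (fun n => Cnorm2 (a n)) L hk_closure_basis);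
    try exact HL; intros n; unfold Cnorm2; nra.
Qed.

Theorem mainTheorem9 (b : nat -> nat -> Cx)
  (Hb : forall k : nat, (2 <= k)%nat -> taylor_coeffs (IminusS_hk k) (b k)) :
  forall a : nat -> Cx, inH2 a ->
  forall eps : R, 0 < eps ->
  exists (N : nat) (c : nat -> Cx) (L : R),
    infinite_sum
      (fun n => Cnorm2 (Csub (a n) (Csum (fun j => Cmul (c j) (b (j + 2)%nat n)) N))) L
    /\ sqrt L < eps.
Proof.
  intros a Ha eps Heps. destruct (l2_closure_hk_span_inH2 a Ha) as [Hre Him].
  destruct (Hre (eps / 2)) as [y1 [Hy1 B1]]; [lra|].
  destruct (Him (eps / 2)) as [y2 [Hy2 B2]]; [lra|].
  destruct (span_repr _ _ Hy1) as [N1 R1], (span_repr _ _ Hy2) as [N2 R2].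
  destruct (R1 (Nat.max N1 N2)) as [c1 E1]; [lia|].
  destruct (R2 (Nat.max N1 N2)) as [c2 E2]; [lia|].
  apply functional_extensionality in E1, E2. subst y1 y2.
  exists (Nat.max N1 N2), (fun j => (c1 j, c2 j)).
  apply exists_infinite_sum_sqrt_lt; [exact Heps| |].
  - intros n. unfold Cnorm2. nra.
  - intros M. specialize (B1 M). specialize (B2 M). cbv beta in B1, B2.
    rewrite (sum_eq _ _ _ (fun n _ => Cnorm2_sub_Csum_IminusS_hk b Hb _ c1 c2 _ n)), plus_sum.
    lra.
Qed.
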